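(* Assume $\mathfrak{d}=\omega_1$, and let $\langle f_\alpha:\alpha<\omega_1\rangle$ be functions in ${}^\omega\omega$ with $f_\alpha<^*f_\beta$ whenever $\alpha<\beta$ and such that every $g\in{}^\omega\omega$ satisfies $g<^*f_\alpha$ for some $\alpha$. Let $\{P_i:i<\omega\}$ be a partition of $\omega$ into infinite sets, $Z_\alpha=\{n:\exists i\,(n\in P_i\text{ and }n>f_\alpha(i))\}$, and let $X$ be the space on $(\omega\times\omega_1)\cup\{\infty\}$ with points of $\omega\times\omega_1$ isolated and a local subbase at $\infty$ consisting of the sets $X\setminus(P_i\times\omega_1)$ ($i<\omega$) and $X\setminus(Z_\alpha\times\alpha)$ ($\alpha<\omega_1$). Then $X$ is not $U$-selective for any ultrafilter $U$ on $\omega$ which is not a $P$-point.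
   Context: $f<^*g$ means $f(n)<g(n)$ for all but finitely many $n$. $\mathcal{F}(X)$ is the set of nonempty closed subsets of $X$; $\varphi:Y\rightarrow\mathcal{F}(X)$ is lower semicontinuous if for every open $W\subseteq X$, $\{y:\varphi(y)\cap W\neq\emptyset\}$ is open in $Y$. $X$ is $Y$-selective if every lower semicontinuous $\varphi:Y\rightarrow\mathcal{F}(X)$ has a continuous selection. For a filter $U$ on $\omega$, $Y_U$ is the space on $\omega\cup\{\infty\}$ with points of $\omega$ isolated and neighborhoods of $\infty$ the sets $A\cup\{\infty\}$, $A\in U$; $U$-selective means $Y_U$-selective. An ultrafilter $U$ on $\omega$ is a $P$-point if every function $\omega\rightarrow\omega$ is either constant or finite-to-one on some set in $U$. *)

(* Sets are predicates [T -> Prop]; a topological space is a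
   carrier type together with its predicate of open sets. *)
From Stdlib Require Import List Arith.

Definition set (T : Type) := T -> Prop.

Definition is_closed {X : Type} (openX : set X -> Prop) (F : set X) : Prop :=
  openX (fun x => ~ F x).

Definition nonempty_closed {X : Type} (openX : set X -> Prop) (F : set X) : Prop :=
  (exists x, F x) /\ is_closed openX F.

Definition continuous_map {Y X : Type} (openY : set Y -> Prop) (openX : set X -> Prop)
  (s : Y -> X) : Prop :=
  forall W : set X, openX W -> openY (fun y => W (s y)).

Definition lsc {Y X : Type} (openY : set Y -> Prop) (openX : set X -> Prop)
  (phi : Y -> set X) : Prop :=
  forall W : set X, openX W -> openY (fun y => exists x, phi y x /\ W x).

Definition selective {Y X : Type} (openY : set Y -> Prop) (openX : set X -> Prop) : Prop :=
  forall phi : Y -> set X,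
    (forall y, nonempty_closed openX (phi y)) ->
    lsc openY openX phi ->
    exists s : Y -> X, continuous_map openY openX s /\ forall y, phi y (s y).

Definition ultrafilter (U : set (set nat)) : Prop :=
  U (fun _ => True) /\
  ~ U (fun _ => False) /\
  (forall A B : set nat, U A -> (forall n, A n -> B n) -> U B) /\
  (forall A B : set nat, U A -> U B -> U (fun n => A n /\ B n)) /\
  (forall A : set nat, U A \/ U (fun n => ~ A n)).

Definition P_point (U : set (set nat)) : Prop :=
  forall h : nat -> nat, exists A : set nat, U A /\
    ((exists c, forall n, A n -> h n = c) \/
     (forall k, exists N, forall n, A n -> h n = k -> n < N)).

(* Y_U: points omega ∪ {oo} encoded as [option nat] with [None] = oo;
   points of omega isolated, neighbourhoods of oo are A ∪ {oo}, A ∈ U. *)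
Definition YU_open (U : set (set nat)) (W : set (option nat)) : Prop :=
  W None -> exists A : set nat, U A /\ forall n, A n -> W (Some n).

Definition U_selective {X : Type} (U : set (set nat)) (openX : set X -> Prop) : Prop :=
  selective (YU_open U) openX.

Definition lt_star (f g : nat -> nat) : Prop :=
  exists N, forall n, N <= n -> f n < g n.

Definition infinite_nat (A : set nat) : Prop :=
  forall N, exists n, N <= n /\ A n.

(* (W, lt) is (order-isomorphic to) omega_1: a strict well-order which is
   uncountable and all of whose proper initial segments are countable. *)
Definition omega1_order (W : Type) (lt : W -> W -> Prop) : Prop :=
  (forall a, ~ lt a a) /\
  (forall a b c, lt a b -> lt b c -> lt a c) /\
  (forall a b, lt a b \/ a = b \/ lt b a) /\
  well_founded lt /\
  (~ exists g : W -> nat, forall a b, g a = g b -> a = b) /\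
  (forall c, exists g : W -> nat, forall a b, lt a c -> lt b c -> g a = g b -> a = b).

Definition infinite_partition (P : nat -> set nat) : Prop :=
  (forall n, exists i, P i n) /\
  (forall i j n, P i n -> P j n -> i = j) /\
  (forall i, infinite_nat (P i)).

Definition Zset {W : Type} (P : nat -> set nat) (f : W -> nat -> nat) (a : W) : set nat :=
  fun n => exists i, P i n /\ f a i < n.

(* The space X on (omega x omega_1) ∪ {oo} ([None] = oo): points of
   omega x omega_1 isolated, local subbase at oo consisting of
   X \ (P_i x omega_1) and X \ (Z_alpha x alpha). *)
Definition X_sub_P (P : nat -> set nat) {W : Type} (i : nat) : set (option (nat * W)) :=
  fun x => match x with None => True | Some (n, _) => ~ P i n end.

Definition X_sub_Z {W : Type} (lt : W -> W -> Prop) (P : nat -> set nat)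
  (f : W -> nat -> nat) (a : W) : set (option (nat * W)) :=
  fun x => match x with None => True | Some (n, b) => ~ (Zset P f a n /\ lt b a) end.

Definition X_open {W : Type} (lt : W -> W -> Prop) (P : nat -> set nat)
  (f : W -> nat -> nat) (O : set (option (nat * W))) : Prop :=
  O None ->
  exists (I : list nat) (J : list W),
    forall x, (forall i, In i I -> X_sub_P P i x) ->
              (forall a, In a J -> X_sub_Z lt P f a x) -> O x.

(* Let h witness that U is not a P-point, and for each n pick e n >= n in the
   block P_(h n).  The multifunction phi(n) = {e n} x omega_1, phi(oo) = {oo}
   is lower semicontinuous: a basic neighbourhood of oo omits finitely many
   blocks, which h avoids on a U-large set, and finitely many Z_a x a, which
   a column b above all those a avoids.  A continuous selection s, however,
   has countably many second coordinates, all below some a; continuity at oo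
   for the neighbourhood X \ (Z_a x a) then yields a U-large set on which
   e n <= f_a (h n), so that h is finite-to-one there since e n >= n. *)

From Stdlib Require Import List Lia Classical ClassicalEpsilon Cantor.

Section Omega1.

Variables (W : Type) (lt : W -> W -> Prop).
Hypothesis hW : omega1_order W lt.

Lemma omega1_inhabited : inhabited W.
Proof.
  destruct hW as [_ [_ [_ [_ [Hunc _]]]]].
  apply NNPP; intro Hempty; apply Hunc.
  exists (fun _ => 0); intros a; exfalso; exact (Hempty (inhabits a)).
Qed.

Lemma omega1_asym (a b : W) : lt a b -> ~ lt b a.
Proof.
  destruct hW as [Hirr [Htr _]].
  intros Hab Hba; exact (Hirr a (Htr _ _ _ Hab Hba)).
Qed.

(* If no a bounds beta, then W = union of the countable initial segments
   below the beta n, which encodes W injectively into nat * nat. *)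
Lemma omega1_countable_bounded (beta : nat -> W) :
  exists a, forall n, lt (beta n) a.
Proof.
  destruct hW as [_ [_ [Htri [_ [Hunc Hcnt]]]]].
  apply NNPP; intro Hunbounded.
  assert (Hbelow : forall a, exists n, a = beta n \/ lt a (beta n)).
  { intro a; apply NNPP; intro Hn; apply Hunbounded; exists a; intro n.
    destruct (Htri (beta n) a) as [H | [H | H]]; auto;
      exfalso; apply Hn; exists n; auto. }
  destruct (choice _ Hcnt) as [code Hcode].
  destruct (choice _ Hbelow) as [N HN].
  apply Hunc.
  exists (fun a => to_nat (N a,
            if excluded_middle_informative (a = beta (N a)) then 0
            else S (code (beta (N a)) a))).
  intros a b Hab.
  apply (f_equal of_nat) in Hab; rewrite !cancel_of_to in Hab.
  injection Hab as HNab Hc.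
  destruct (excluded_middle_informative (a = beta (N a))) as [Ea | Ea];
    destruct (excluded_middle_informative (b = beta (N b))) as [Eb | Eb];
    try discriminate.
  - rewrite Ea, Eb, HNab; reflexivity.
  - injection Hc as Hc; rewrite HNab in Hc.
    destruct (HN a) as [Xa | Xa]; [contradiction |].
    destruct (HN b) as [Yb | Yb]; [contradiction |].
    rewrite HNab in Xa; exact (Hcode _ a b Xa Yb Hc).
Qed.

Lemma omega1_list_bounded (J : list W) : exists b, forall a, In a J -> lt a b.
Proof.
  destruct omega1_inhabited as [w0].
  destruct (omega1_countable_bounded (fun n => nth n J w0)) as [b Hb].
  exists b; intros a Ha.
  destruct (In_nth J a w0 Ha) as [n [_ <-]]; apply Hb.
Qed.

End Omega1.

Section NonPPoint.

Variable U : set (set nat).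
Hypothesis hU : ultrafilter U.

Lemma ultrafilter_list_inter (I : list nat) (A : nat -> set nat) :
  (forall i, U (A i)) -> U (fun n => forall i, In i I -> A i n).
Proof.
  destruct hU as [UT [_ [Umono [Uint _]]]].
  intro HA; induction I as [| i I IH].
  - apply (Umono _ _ UT); intros n _ i [].
  - apply (Umono _ _ (Uint _ _ (HA i) IH)).
    intros n [Hi HI] j [<- | Hj]; auto.
Qed.

Lemma ultrafilter_inter_nonempty (A B : set nat) :
  U A -> U B -> exists n, A n /\ B n.
Proof.
  destruct hU as [_ [UF [Umono [Uint _]]]].
  intros HA HB; apply NNPP; intro Hempty; apply UF.
  apply (Umono _ _ (Uint _ _ HA HB)); intros n Hn; apply Hempty; eauto.
Qed.

Lemma ultrafilter_not_compl (A : set nat) : ~ U (fun n => ~ A n) -> U A.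
Proof.
  destruct hU as [_ [_ [_ [_ Uult]]]].
  intro H; destruct (Uult A); tauto.
Qed.

Lemma not_P_point_witness :
  ~ P_point U ->
  exists h : nat -> nat,
    (forall A c, U A -> ~ forall n, A n -> h n = c) /\
    (forall A, U A -> ~ forall k, exists N, forall n, A n -> h n = k -> n < N).
Proof.
  intro HnP; apply not_all_ex_not in HnP as [h Hh].
  exists h; split.
  - intros A c HA Hc; apply Hh; exists A; split; [exact HA | left; eauto].
  - intros A HA Hf; apply Hh; exists A; split; [exact HA | right; exact Hf].
Qed.

Variable h : nat -> nat.
Hypothesis h_not_const : forall A c, U A -> ~ forall n, A n -> h n = c.
Hypothesis h_not_finite_to_one :
  forall A, U A -> ~ forall k, exists N, forall n, A n -> h n = k -> n < N.

Lemma non_P_point_avoids (i : nat) : U (fun n => h n <> i).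
Proof.
  apply ultrafilter_not_compl; intro H.
  apply (h_not_const _ i H); intros n Hn; apply NNPP, Hn.
Qed.

Lemma non_P_point_escapes (g : nat -> nat) : U (fun n => g (h n) < n).
Proof.
  apply ultrafilter_not_compl; intro H.
  apply (h_not_finite_to_one _ H); intro k; exists (S (g k)).
  intros n Hn <-; lia.
Qed.

End NonPPoint.

Lemma infinite_partition_choice (P : nat -> set nat) :
  infinite_partition P ->
  forall h : nat -> nat, exists e, forall n, P (h n) (e n) /\ n <= e n.
Proof.
  intros [_ [_ Pinf]] h.
  apply (choice (fun n m => P (h n) m /\ n <= m)); intro n.
  destruct (Pinf (h n) n) as [m [Hle Hm]]; eauto.
Qed.

Section Counterexample.

Variables (W : Type) (lt : W -> W -> Prop) (f : W -> nat -> nat) (P : nat -> set nat).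
Hypothesis hW : omega1_order W lt.
Hypothesis hP : infinite_partition P.

Let openX := X_open lt P f.

Definition column (k : nat) : set (option (nat * W)) :=
  fun x => match x with Some (m, _) => m = k | None => False end.

Lemma X_open_sub_Z (a : W) : openX (X_sub_Z lt P f a).
Proof.
  intros _; exists nil, (a :: nil); intros x _ Hx; apply Hx; left; reflexivity.
Qed.

Lemma column_nonempty_closed (k : nat) : nonempty_closed openX (column k).
Proof.
  destruct (omega1_inhabited W lt hW) as [w0].
  split; [exists (Some (k, w0)); reflexivity |].
  intros _; destruct hP as [Pcov _]; destruct (Pcov k) as [i Hi].
  exists (i :: nil), nil; intros [[m b] |] Hx _; simpl; auto.
  intros ->; exact (Hx i (or_introl eq_refl) Hi).
Qed.

Lemma infinity_nonempty_closed : nonempty_closed openX (fun x => x = None).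
Proof.
  split; [exists None; reflexivity |].
  intro H; exfalso; apply H; reflexivity.
Qed.

Variable U : set (set nat).
Hypothesis hU : ultrafilter U.
Variables (h e : nat -> nat).
Hypothesis h_not_const : forall A c, U A -> ~ forall n, A n -> h n = c.
Hypothesis h_not_finite_to_one :
  forall A, U A -> ~ forall k, exists N, forall n, A n -> h n = k -> n < N.
Hypothesis he : forall n, P (h n) (e n) /\ n <= e n.

Definition phi (y : option nat) : set (option (nat * W)) :=
  match y with None => fun x => x = None | Some n => column (e n) end.

Lemma phi_lsc : lsc (YU_open U) openX phi.
Proof.
  intros O HO [x [-> HOinf]].
  destruct (HO HOinf) as [I [J HIJ]].
  destruct (omega1_list_bounded W lt hW J) as [b Hb].
  exists (fun n => forall i, In i I -> h n <> i); split.
  { apply ultrafilter_list_inter; [exact hU |].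
    intro i; apply (non_P_point_avoids U hU h h_not_const). }
  intros n Hn; exists (Some (e n, b)); split; [reflexivity |].
  apply HIJ.
  - intros i Hi Hpi; apply (Hn i Hi).
    destruct hP as [_ [Pdis _]]; exact (Pdis _ _ _ (proj1 (he n)) Hpi).
  - intros a Ha [_ Hba]; exact (omega1_asym W lt hW _ _ (Hb a Ha) Hba).
Qed.

Lemma phi_no_continuous_selection (s : option nat -> option (nat * W)) :
  continuous_map (YU_open U) openX s -> ~ forall y, phi y (s y).
Proof.
  intros Hcont Hs.
  destruct (omega1_inhabited W lt hW) as [w0].
  set (beta := fun n => match s (Some n) with Some (_, b) => b | None => w0 end).
  destruct (omega1_countable_bounded W lt hW beta) as [a Ha].
  destruct (Hcont _ (X_open_sub_Z a)) as [A [HA HAs]].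
  { rewrite (Hs None); exact I. }
  destruct (ultrafilter_inter_nonempty U hU _ _ HA
              (non_P_point_escapes U hU h h_not_finite_to_one (f a)))
    as [n [HAn Hesc]].
  specialize (HAs n HAn); specialize (Ha n); specialize (Hs (Some n)).
  unfold beta in Ha; simpl in Hs.
  destruct (s (Some n)) as [[m b] |]; [simpl in Hs, HAs | contradiction].
  subst m; apply HAs; split; [| exact Ha].
  exists (h n); split; [apply he | specialize (he n); lia].
Qed.

End Counterexample.

Theorem mainTheorem5
  (W : Type) (lt : W -> W -> Prop) (hW : omega1_order W lt)
  (f : W -> nat -> nat)
  (hmono : forall a b, lt a b -> lt_star (f a) (f b))
  (hdom : forall g : nat -> nat, exists a, lt_star g (f a))
  (P : nat -> set nat) (hP : infinite_partition P)
  (U : set (set nat)) (hU : ultrafilter U) (hnP : ~ P_point U) :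
  ~ U_selective U (X_open lt P f).
Proof.
  destruct (not_P_point_witness U hnP) as [h [h_not_const h_not_finite_to_one]].
  destruct (infinite_partition_choice P hP h) as [e he].
  intro Hsel.
  destruct (Hsel (phi W e)) as [s [Hcont Hs]].
  - intros [n |]; simpl.
    + apply column_nonempty_closed; assumption.
    + apply infinity_nonempty_closed.
  - exact (phi_lsc W lt f P hW hP U hU h e h_not_const he).
  - exact (phi_no_continuous_selection W lt f P hW U hU h e
             h_not_finite_to_one he s Hcont Hs).
Qed.
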